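(* Let $(\Sigma_+,\Sigma_-,N_1,N_2,N_3)$ be a solution of the Wainwright–Hsu system satisfying the constraint, with $N_1=0$ and $N_2,N_3>0$. Then there is a constant $c>0$ such that $N_2(\tau)N_3(\tau)\geq c$ for all $\tau\in[0,\infty)$.
   Context: Wainwright–Hsu system: for functions $N_1,N_2,N_3,\Sigma_+,\Sigma_-$ of $\tau\in\mathbb{R}$ (prime denotes $d/d\tau$), $N_1'=(q-4\Sigma_+)N_1$, $N_2'=(q+2\Sigma_++2\sqrt3\Sigma_-)N_2$, $N_3'=(q+2\Sigma_+-2\sqrt3\Sigma_-)N_3$, $\Sigma_+'=-(2-q)\Sigma_+-3S_+$, $\Sigma_-'=-(2-q)\Sigma_--3S_-$, where $q=2(\Sigma_+^2+\Sigma_-^2)$, $S_+=\frac12[(N_2-N_3)^2-N_1(2N_1-N_2-N_3)]$, $S_-=\frac{\sqrt3}{2}(N_3-N_2)(N_1-N_2-N_3)$, together with the constraint $\Sigma_+^2+\Sigma_-^2+\frac34[N_1^2+N_2^2+N_3^2-2(N_1N_2+N_2N_3+N_1N_3)]=1$. Solutions exist for all $\tau\in\mathbb{R}$. *)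

From Stdlib Require Import Reals.
Open Scope R_scope.

Definition WH_q (Sp Sm : R) : R := 2 * (Sp ^ 2 + Sm ^ 2).

Definition WH_Splus (N1 N2 N3 : R) : R :=
  / 2 * ((N2 - N3) ^ 2 - N1 * (2 * N1 - N2 - N3)).

Definition WH_Sminus (N1 N2 N3 : R) : R :=
  sqrt 3 / 2 * (N3 - N2) * (N1 - N2 - N3).

Definition WH_solution (N1 N2 N3 Sp Sm : R -> R) : Prop :=
  (forall t, derivable_pt_lim N1 t
     ((WH_q (Sp t) (Sm t) - 4 * Sp t) * N1 t)) /\
  (forall t, derivable_pt_lim N2 t
     ((WH_q (Sp t) (Sm t) + 2 * Sp t + 2 * sqrt 3 * Sm t) * N2 t)) /\
  (forall t, derivable_pt_lim N3 t
     ((WH_q (Sp t) (Sm t) + 2 * Sp t - 2 * sqrt 3 * Sm t) * N3 t)) /\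
  (forall t, derivable_pt_lim Sp t
     (- (2 - WH_q (Sp t) (Sm t)) * Sp t - 3 * WH_Splus (N1 t) (N2 t) (N3 t))) /\
  (forall t, derivable_pt_lim Sm t
     (- (2 - WH_q (Sp t) (Sm t)) * Sm t - 3 * WH_Sminus (N1 t) (N2 t) (N3 t))) /\
  (forall t, Sp t ^ 2 + Sm t ^ 2
     + 3 / 4 * (N1 t ^ 2 + N2 t ^ 2 + N3 t ^ 2
                - 2 * (N1 t * N2 t + N2 t * N3 t + N1 t * N3 t)) = 1).

(* When N1 = 0 the quantity F = ln (N2 N3) - Σ- w / √3, with w = (N2 - N3) / (N2 + N3),
   is nondecreasing along solutions: using the constraint, its derivative is the quadratic form
   2 (1 + Σ+)^2 + 2 s^2 + (2 - q) s / √3 in s = Σ- w, whose middle coefficient is at most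
   4 (1 + Σ+).  Since |Σ-| <= 1 and |w| < 1, the correction term is bounded, so ln (N2 N3)
   stays above F(0) - 1 for all forward times. *)

From Stdlib Require Import Reals Lra Psatz.
Open Scope R_scope.

Lemma derivative_nonneg_nondecreasing (f f' : R -> R) :
  (forall t, derivable_pt_lim f t (f' t)) -> (forall t, 0 <= f' t) ->
  forall a b, a <= b -> f a <= f b.
Proof.
  intros df f'_ge0.
  set (pr := fun t => exist _ (f' t) (df t) : derivable_pt f t).
  apply (nonneg_derivative_1 f pr).
  intro t; rewrite (derive_pt_eq_0 f t (f' t) (pr t) (df t)); apply f'_ge0.
Qed.

Lemma exp_le_of_le_ln x y : 0 < y -> x <= ln y -> exp x <= y.
Proof.
  intros y_pos [lt | ->].
  - rewrite <- (exp_ln y) by exact y_pos; left; apply exp_increasing, lt.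
  - right; apply exp_ln, y_pos.
Qed.

Lemma sqrt3_ge_1 : 1 <= sqrt 3.
Proof. rewrite <- sqrt_1; apply sqrt_le_1_alt; lra. Qed.

Lemma quadratic_form_nonneg u s k : 0 <= k <= 4 * u -> 0 <= 2 * u ^ 2 + 2 * s ^ 2 + k * s.
Proof.
  intros [k_ge0 k_le].
  destruct (Rle_or_lt 0 s) as [s_ge0 | s_lt0]; [nra |].
  assert (4 * u * s <= k * s) by nra.
  pose proof (pow2_ge_0 (u + s)); nra.
Qed.

Section VanishingN1.

Variables N2 N3 Sp Sm : R -> R.

Hypothesis N2_pos : forall t, 0 < N2 t.
Hypothesis N3_pos : forall t, 0 < N3 t.
Hypothesis dN2 : forall t, derivable_pt_lim N2 t
  ((WH_q (Sp t) (Sm t) + 2 * Sp t + 2 * sqrt 3 * Sm t) * N2 t).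
Hypothesis dN3 : forall t, derivable_pt_lim N3 t
  ((WH_q (Sp t) (Sm t) + 2 * Sp t - 2 * sqrt 3 * Sm t) * N3 t).
Hypothesis dSm : forall t, derivable_pt_lim Sm t
  (- (2 - WH_q (Sp t) (Sm t)) * Sm t - 3 * WH_Sminus 0 (N2 t) (N3 t)).
Hypothesis constraint : forall t, Sp t ^ 2 + Sm t ^ 2 + 3 / 4 * (N2 t - N3 t) ^ 2 = 1.

Definition WH_w t := (N2 t - N3 t) / (N2 t + N3 t).

Definition WH_monotone t := ln (N2 t * N3 t) - Sm t * WH_w t / sqrt 3.

Lemma derivable_pt_lim_ln_N2N3 t :
  derivable_pt_lim (fun t => ln (N2 t * N3 t)) t (2 * WH_q (Sp t) (Sm t) + 4 * Sp t).
Proof.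
  pose proof (N2_pos t); pose proof (N3_pos t).
  assert (dP := derivable_pt_lim_mult N2 N3 t _ _ (dN2 t) (dN3 t)).
  assert (dlnP := derivable_pt_lim_comp _ ln t _ _ dP
    (derivable_pt_lim_ln (N2 t * N3 t) ltac:(nra))).
  unfold comp in dlnP; unfold mult_fct in *.
  match type of dlnP with derivable_pt_lim _ _ ?l =>
    replace (2 * WH_q (Sp t) (Sm t) + 4 * Sp t) with l by (field; lra) end.
  exact dlnP.
Qed.

Lemma derivable_pt_lim_WH_w t :
  derivable_pt_lim WH_w t (2 * sqrt 3 * Sm t * (1 - WH_w t ^ 2)).
Proof.
  pose proof (N2_pos t); pose proof (N3_pos t).
  assert (dw := derivable_pt_lim_div _ _ t _ _
    (derivable_pt_lim_minus N2 N3 t _ _ (dN2 t) (dN3 t))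
    (derivable_pt_lim_plus N2 N3 t _ _ (dN2 t) (dN3 t)) ltac:(unfold plus_fct; lra)).
  unfold WH_w; unfold div_fct, minus_fct, plus_fct, Rsqr in *.
  match type of dw with derivable_pt_lim _ _ ?l =>
    replace (2 * sqrt 3 * Sm t * _) with l by (field; lra) end.
  exact dw.
Qed.

(* Only the term 3/2 (N2 - N3)^2 coming from Σ-' needs the constraint: together with
   2 q + 4 Σ+ - 2 Σ-^2 it gives 2 (1 + Σ+)^2. *)
Lemma derivable_pt_lim_WH_monotone t : derivable_pt_lim WH_monotone t
  (2 * (1 + Sp t) ^ 2 + 2 * (Sm t * WH_w t) ^ 2
   + (2 - WH_q (Sp t) (Sm t)) / sqrt 3 * (Sm t * WH_w t)).
Proof.
  pose proof (N2_pos t); pose proof (N3_pos t).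
  assert (sqrt3_pos : 0 < sqrt 3) by (pose proof sqrt3_ge_1; lra).
  assert (dF := derivable_pt_lim_minus _ _ t _ _ (derivable_pt_lim_ln_N2N3 t)
    (derivable_pt_lim_div _ (fun _ => sqrt 3) t _ _
       (derivable_pt_lim_mult Sm WH_w t _ _ (dSm t) (derivable_pt_lim_WH_w t))
       (derivable_pt_lim_const (sqrt 3) t) ltac:(lra))).
  unfold WH_monotone; unfold minus_fct, div_fct, mult_fct, Rsqr in *.
  match type of dF with derivable_pt_lim _ _ ?l =>
    replace (_ + _ + _) with (l - 2 * (Sp t ^ 2 + Sm t ^ 2 + 3 / 4 * (N2 t - N3 t) ^ 2 - 1))
  end.
  - rewrite constraint; replace (1 - 1) with 0 by ring.
    rewrite Rmult_0_r, Rminus_0_r; exact dF.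
  - unfold WH_q, WH_Sminus, WH_w; field; lra.
Qed.

Lemma WH_monotone_nondecreasing a b : a <= b -> WH_monotone a <= WH_monotone b.
Proof.
  apply (derivative_nonneg_nondecreasing _ _ derivable_pt_lim_WH_monotone); intro t.
  apply quadratic_form_nonneg.
  pose proof (constraint t); pose proof (pow2_ge_0 (Sm t)); pose proof (pow2_ge_0 (N2 t - N3 t)).
  assert (Sp_bound : Sp t ^ 2 <= 1) by lra.
  assert (gap_bound : 0 <= 2 - WH_q (Sp t) (Sm t) <= 4 * (1 + Sp t)) by (unfold WH_q; nra).
  pose proof sqrt3_ge_1.
  split.
  - apply Rmult_le_pos; [lra | left; apply Rinv_0_lt_compat; lra].
  - apply (Rle_trans _ (2 - WH_q (Sp t) (Sm t))); [| lra].
    unfold Rdiv; rewrite <- (Rmult_1_r (2 - _)) at 2.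
    apply Rmult_le_compat_l; [lra |].
    rewrite <- Rinv_1; apply Rinv_le_contravar; lra.
Qed.

Lemma Sm_WH_w_ge_opp1 t : -1 <= Sm t * WH_w t.
Proof.
  pose proof (N2_pos t); pose proof (N3_pos t).
  assert (WH_w_def : WH_w t * (N2 t + N3 t) = N2 t - N3 t) by (unfold WH_w; field; lra).
  assert (WH_w_bound : -1 <= WH_w t <= 1) by nra.
  pose proof (constraint t); pose proof (pow2_ge_0 (Sp t)); pose proof (pow2_ge_0 (N2 t - N3 t)).
  assert (Sm_bound : -1 <= Sm t <= 1) by nra.
  nra.
Qed.

Lemma N2N3_lower_bound t : 0 <= t -> exp (WH_monotone 0 - 1) <= N2 t * N3 t.
Proof.
  intro t_ge0.
  pose proof (N2_pos t); pose proof (N3_pos t); pose proof sqrt3_ge_1.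
  apply exp_le_of_le_ln; [nra |].
  assert (correction_bound : -1 <= Sm t * WH_w t / sqrt 3).
  { unfold Rdiv; apply (Rmult_le_reg_r (sqrt 3)); [lra |].
    rewrite Rmult_assoc, Rinv_l, Rmult_1_r by lra.
    pose proof (Sm_WH_w_ge_opp1 t); lra. }
  pose proof (WH_monotone_nondecreasing 0 t t_ge0) as mono.
  unfold WH_monotone at 2 in mono; lra.
Qed.

End VanishingN1.

Theorem mainTheorem10 (N1 N2 N3 Sp Sm : R -> R) :
  WH_solution N1 N2 N3 Sp Sm ->
  (forall t, N1 t = 0) ->
  (forall t, 0 < N2 t) ->
  (forall t, 0 < N3 t) ->
  exists c : R, 0 < c /\ forall t, 0 <= t -> c <= N2 t * N3 t.
Proof.
  intros [_ [dN2 [dN3 [_ [dSm constraint]]]]] N1_0 N2_pos N3_pos.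
  exists (exp (WH_monotone N2 N3 Sm 0 - 1)); split; [apply exp_pos |].
  apply (N2N3_lower_bound N2 N3 Sp Sm N2_pos N3_pos dN2 dN3).
  - intro t; specialize (dSm t); rewrite N1_0 in dSm; exact dSm.
  - intro t; rewrite <- (constraint t), N1_0; ring.
Qed.
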